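(* Let $\lambda=\lambda(d)>0$ be any function of $d$ that is bounded above by a constant. Then there is a function $\varepsilon(d)\to0$ as $d\to\infty$ such that for every $d$ and every triangle-free graph $G$ on $n$ vertices with maximum degree $d$, \[ \frac1n\overline\alpha_G(\lambda)\;\ge\;(1-\varepsilon(d))\,\alpha_{T_d}(\lambda). \]
   Context: For a graph $G$ and $\lambda>0$, $\overline\alpha_G(\lambda)=\lambda P_G'(\lambda)/P_G(\lambda)$ where $P_G(\lambda)=\sum_J\lambda^{|J|}$ over all independent sets $J$ of $G$; it is the expected size of an independent set drawn from the hard-core model $\Pr[J]=\lambda^{|J|}/P_G(\lambda)$. For an integer $d\ge2$ and $\lambda>0$, $\alpha_{T_d}(\lambda)$ denotes the unique solution $\alpha\in(0,1/2)$ of $\lambda=\frac{\alpha}{1-\alpha}\left(\frac{1-\alpha}{1-2\alpha}\right)^d$. *)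

From Stdlib Require Import Reals.
From mathcomp Require Import all_boot.
Open Scope R_scope.
Set Implicit Arguments. Unset Strict Implicit. Unset Printing Implicit Defensive.

Definition simple_graph (V : finType) (e : rel V) : Prop :=
  (forall x y, e x y = e y x) /\ (forall x, e x x = false).

Definition triangle_free (V : finType) (e : rel V) : Prop :=
  forall x y z, e x y -> e y z -> e x z -> False.

Definition deg (V : finType) (e : rel V) (v : V) : nat := #|[set w | e v w]|.

Definition max_degree_eq (V : finType) (e : rel V) (d : nat) : Prop :=
  (forall v, (deg e v <= d)%N) /\ (exists v, deg e v = d).

Definition independent (V : finType) (e : rel V) (J : {set V}) : bool :=
  [forall x in J, forall y in J, ~~ e x y].

Definition indep_poly (V : finType) (e : rel V) (lam : R) : R :=
  \big[Rplus/R0]_(J | independent e J) (pow lam #|J|).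

(* lam * P_G'(lam), computed termwise: sum over independent J of |J| lam^|J| *)
Definition lam_dindep_poly (V : finType) (e : rel V) (lam : R) : R :=
  \big[Rplus/R0]_(J | independent e J) (Rmult (INR #|J|) (pow lam #|J|)).

Definition avg_alpha (V : finType) (e : rel V) (lam : R) : R :=
  (lam_dindep_poly e lam / indep_poly e lam).

(* a is the (unique) solution in (0,1/2) of
   lam = a/(1-a) * ((1-a)/(1-2a))^d, i.e. a = alpha_{T_d}(lam). *)
Definition is_alpha_T (d : nat) (lam a : R) : Prop :=
  (0 < a < / 2) /\ lam = (a / (1 - a) * pow ((1 - a) / (1 - 2 * a)) d).

From HB Require Import structures.
From Stdlib Require Import Reals Lra ClassicalEpsilon.
From mathcomp Require Import all_boot.
Open Scope R_scope.
Set Implicit Arguments. Unset Strict Implicit. Unset Printing Implicit Defensive.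

(* Let Y_v be the number of neighbours of v having no neighbour in the hard-core
   set J. In a triangle-free graph the neighbours of v are pairwise non-adjacent,
   so given J outside N(v) each such neighbour is occupied independently with
   probability lam / (1 + lam); hence (1 + lam) Pr[v in J] = lam E[(1 + lam)^-Y_v].
   A vertex is uncovered with probability (1 + lam) / lam times its occupation
   probability and has at most d neighbours, so the average of Y_v is at most
   (1 + lam) d alpha / lam, where alpha = E|J| / n. Convexity of (1 + lam)^-y then
   shows that for every y either lam y <= (1 + lam) d alpha or
   lam (1 + lam)^-y <= (1 + lam) alpha. Choosing y so that the first alternative
   reads alpha >= (1 - del) a, the relation a e^(d a (1 - a)) <= lam satisfied by
   a = alpha_T_d(lam) makes the second alternative give the same bound for large d;
   activities above del / 4 are reduced to del / 4 by monotonicity of alpha in lam.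
   Diagonalising over del = 1 / (k + 1) produces eps. *)

Lemma Rplus_associative : associative Rplus.
Proof. by move=> x y z; rewrite Rplus_assoc. Qed.
Lemma Rmult_associative : associative Rmult.
Proof. by move=> x y z; rewrite Rmult_assoc. Qed.
HB.instance Definition _ :=
  Monoid.isComLaw.Build R R0 Rplus Rplus_associative Rplus_comm Rplus_0_l.
HB.instance Definition _ :=
  Monoid.isComLaw.Build R R1 Rmult Rmult_associative Rmult_comm Rmult_1_l.
HB.instance Definition _ := Monoid.isMulLaw.Build R R0 Rmult Rmult_0_l Rmult_0_r.
HB.instance Definition _ :=
  Monoid.isAddLaw.Build R Rmult Rplus Rmult_plus_distr_r Rmult_plus_distr_l.

Section RealSums.
Variables (I : finType) (P : pred I).

Lemma big_Rle (F G : I -> R) :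
  (forall i, P i -> F i <= G i) ->
  \big[Rplus/R0]_(i | P i) F i <= \big[Rplus/R0]_(i | P i) G i.
Proof. by move=> FG; apply: (big_ind2 Rle (Rle_refl 0)) => // *; apply: Rplus_le_compat. Qed.

Lemma big_Rge0 (F : I -> R) :
  (forall i, P i -> 0 <= F i) -> 0 <= \big[Rplus/R0]_(i | P i) F i.
Proof.
by move=> F0; apply: (big_ind (Rle 0) (Rle_refl 0)) => // *; apply: Rplus_le_le_0_compat.
Qed.

Lemma big_Rminus (F G : I -> R) :
  \big[Rplus/R0]_(i | P i) (F i - G i) =
  \big[Rplus/R0]_(i | P i) F i - \big[Rplus/R0]_(i | P i) G i.
Proof.
rewrite /Rminus big_split /=; congr (_ + _).
by rewrite (big_morph Ropp Ropp_plus_distr Ropp_0).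
Qed.

Lemma INR_card : INR #|[set i | P i]| = \big[Rplus/R0]_(i | P i) 1.
Proof.
rewrite cardsE -sum1_card (big_morph INR plus_INR (erefl (INR 0))).
by apply: eq_bigl => i; rewrite unfold_in.
Qed.

Lemma big_Rconst (c : R) : \big[Rplus/R0]_(i | P i) c = INR #|[set i | P i]| * c.
Proof.
by rewrite INR_card big_distrl /=; apply: eq_bigr => i _; rewrite Rmult_1_l.
Qed.

End RealSums.

Lemma disjoint_setU1l (T : finType) (J A : {set T}) (u : T) :
  [disjoint u |: J & A] = (u \notin A) && [disjoint J & A].
Proof. by rewrite -disjointU1; apply: eq_disjoint => x; rewrite !inE. Qed.

Section IndependentSets.
Variables (V : finType) (e : rel V).
Hypothesis e_sym : forall x y, e x y = e y x.
Hypothesis e_irr : forall x, e x x = false.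
Hypothesis e_tf : triangle_free e.
Variable lam : R.

Definition uncovered (J : {set V}) (x : V) := [forall y in J, ~~ e x y].
Definition weight (J : {set V}) := pow lam #|J|.

Lemma uncovered_setU1 (J : {set V}) (u x : V) :
  uncovered (u |: J) x = ~~ e x u && uncovered J x.
Proof.
apply/forall_inP/andP => [H | [xu /forall_inP H] y].
  by split; [apply: H; rewrite setU11 | apply/forall_inP => y yJ; apply: H; rewrite setU1r].
by case/setU1P => [-> | /H].
Qed.

Lemma independent_uncovered (J : {set V}) (u : V) :
  independent e J -> u \in J -> uncovered J u.
Proof. by move/forall_inP; apply. Qed.

Lemma independent_setU1 (J : {set V}) (u : V) : u \notin J ->
  independent e (u |: J) = independent e J && uncovered J u.
Proof.
move=> uJ; apply/forall_inP/andP => [H | [/forall_inP H Ju] x].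
  have Hx x : x \in J -> uncovered J x.
    move=> xJ; have : uncovered (u |: J) x := H x (setU1r u xJ).
    by rewrite uncovered_setU1 => /andP[].
  have : uncovered (u |: J) u := H u (setU11 u J).
  by rewrite uncovered_setU1 => /andP[_ Ju]; split=> //; apply/forall_inP.
move=> xUJ; change (uncovered (u |: J) x); rewrite uncovered_setU1.
case/setU1P: xUJ => [-> | xJ]; first by rewrite e_irr.
by rewrite e_sym (forall_inP Ju) //=; apply: H.
Qed.

Lemma big_setU1_toggle (F : {set V} -> R) (u : V) :
  \big[Rplus/R0]_(J : {set V}) F J =
  \big[Rplus/R0]_(J : {set V} | u \notin J) (F J + F (u |: J)).
Proof.
rewrite (bigID (fun J : {set V} => u \in J)) /= Rplus_comm big_split /=; congr (_ + _).
rewrite (reindex_onto (fun J => u |: J) (fun J => J :\ u)) /=; last exact: setD1K.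
apply: eq_bigl => J; rewrite setU11 /=; apply/eqP/idP => [<- | /setU1K //].
by rewrite !inE eqxx.
Qed.

(* Deleting u is a bijection from the independent sets containing u onto those
   avoiding and uncovering u. *)
Lemma weight_occupied (u : V) :
  (1 + lam) * \big[Rplus/R0]_(J | independent e J && (u \in J)) weight J =
  lam * \big[Rplus/R0]_(J | independent e J && uncovered J u) weight J.
Proof.
have occ : \big[Rplus/R0]_(J | independent e J && (u \in J)) weight J =
  lam * \big[Rplus/R0]_(J | independent e J && uncovered J u && (u \notin J)) weight J.
  rewrite big_mkcond (big_setU1_toggle _ u) big_distrr /=.
  rewrite [RHS](eq_bigl (fun J : {set V} =>
    (u \notin J) && (independent e J && uncovered J u))).
    rewrite big_mkcondr; apply: eq_bigr => J uJ.
    rewrite (negbTE uJ) andbF setU11 andbT independent_setU1 // /weight cardsU1 uJ.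
    by rewrite Rplus_0_l.
  by move=> J; rewrite andbC.
rewrite [in RHS](bigID (fun J : {set V} => u \in J)) /= Rmult_plus_distr_l -occ.
rewrite [X in _ = lam * X + _](eq_bigl (fun J : {set V} => independent e J && (u \in J))).
  by rewrite Rmult_plus_distr_r Rmult_1_l Rplus_comm.
move=> J; case: (boolP (independent e J)) => //= iJ.
by case uJ: (u \in J); rewrite ?andbF ?independent_uncovered.
Qed.

Hypothesis lam_neqN1 : 1 + lam <> 0.
Variable v : V.

Definition free_nbrs (J : {set V}) := #|[set x | e v x && uncovered J x]|.

(* Interpolation between [free_nbrs] (A = set0) and the uncovered neighbourhood
   (A = all neighbours of v): the neighbours in A are removed from the count and
   forbidden in J. *)
Definition free_nbrs_off (A J : {set V}) :=
  #|[set x | e v x && (x \notin A) && uncovered J x]|.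
Definition partial_sum (A : {set V}) :=
  \big[Rplus/R0]_(J | independent e J && [disjoint J & A])
    (weight J * pow (/ (1 + lam)) (free_nbrs_off A J)).

Lemma free_nbrs_off_setU1 (A J : {set V}) (u : V) : e v u -> u \notin A ->
  free_nbrs_off A J = (uncovered J u + free_nbrs_off (u |: A) J)%N.
Proof.
move=> vu uA; rewrite /free_nbrs_off; case Ju: (uncovered J u).
  rewrite (_ : [set x | _] = u |: [set x | e v x && (x \notin u |: A) && uncovered J x]).
    by rewrite cardsU1 !inE eqxx andbF.
  by apply/setP => x; rewrite !inE; case: eqVneq => [->|]; rewrite ?vu ?uA ?Ju.
by apply: eq_card => x; rewrite !inE; case: eqVneq => [->|]; rewrite ?Ju ?andbF.
Qed.

(* The neighbours of v are pairwise non-adjacent, so occupying one of them does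
   not cover another. *)
Lemma free_nbrs_off_add_nbr (A J : {set V}) (u : V) : e v u ->
  free_nbrs_off A (u |: J) = free_nbrs_off A J.
Proof.
move=> vu; apply: eq_card => x; rewrite !inE uncovered_setU1.
case vx: (e v x) => //=; case xu: (e x u) => //=.
by case: (e_tf vx xu vu).
Qed.

Lemma partial_sum_setU1 (A : {set V}) (u : V) : e v u -> u \notin A ->
  partial_sum A = partial_sum (u |: A).
Proof.
move=> vu uA; rewrite /partial_sum big_mkcond (big_setU1_toggle _ u).
rewrite [RHS]big_mkcond [RHS](big_setU1_toggle _ u); apply: eq_bigr => J uJ.
rewrite independent_setU1 // free_nbrs_off_add_nbr // (free_nbrs_off_setU1 _ vu uA).
rewrite ![[disjoint _ & u |: A]]disjoint_sym !disjoint_setU1l.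
rewrite ![[disjoint A & _]]disjoint_sym.
rewrite uA setU11 (negbTE uJ) /weight cardsU1 uJ /=.
case: (independent e J); case: (uncovered J u); case: [disjoint J & A] => /=;
  rewrite ?Rplus_0_l ?Rplus_0_r ?add0n ?add1n //=.
by field.
Qed.

Lemma partial_sum_nbrs (A : {set V}) : A \subset [set x | e v x] ->
  partial_sum A = partial_sum [set x | e v x].
Proof.
have [n] := ubnP #|[set x | e v x] :\: A|; elim: n A => // n IH A.
rewrite ltnS => cardA sAN; have [NA0 | [u]] := set_0Vmem ([set x | e v x] :\: A).
  by congr partial_sum; apply/eqP; rewrite eqEsubset sAN -setD_eq0 NA0 eqxx.
rewrite !inE => /andP[uA vu]; rewrite (partial_sum_setU1 vu uA); apply: IH.
  apply: leq_trans cardA; apply: proper_card; rewrite properEneq.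
  rewrite setDS ?subsetUr // andbT; apply/eqP => /setP/(_ u).
  by rewrite !inE eqxx uA vu.
by rewrite subUset sub1set inE vu.
Qed.

Lemma partial_sum_nbrsE :
  partial_sum [set x | e v x] =
  \big[Rplus/R0]_(J | independent e J && uncovered J v) weight J.
Proof.
apply: eq_big => [J | J _].
  congr (_ && _); apply/idP/forall_inP => [/pred0P J0 x xJ | Jv].
    by apply/negP => vx; have := J0 x; rewrite /= inE xJ vx.
  by apply/pred0P => x /=; rewrite inE; case xJ: (x \in J) => //=; exact/negbTE/Jv.
rewrite (_ : free_nbrs_off _ J = 0%N) ?Rmult_1_r //; apply: eq_card0 => x.
by rewrite !inE; case: (e v x).
Qed.

Lemma partial_sum0 : partial_sum set0 =
  \big[Rplus/R0]_(J | independent e J) (weight J * pow (/ (1 + lam)) (free_nbrs J)).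
Proof.
apply: eq_big => [J | J _].
  by rewrite disjoint_sym eq_disjoint0 ?andbT // => x; rewrite inE.
by congr (_ * pow _ _); apply: eq_card => x; rewrite !inE andbT.
Qed.

Lemma weight_occupied_free_nbrs :
  (1 + lam) * \big[Rplus/R0]_(J | independent e J && (v \in J)) weight J =
  lam * \big[Rplus/R0]_(J | independent e J) (weight J * pow (/ (1 + lam)) (free_nbrs J)).
Proof.
by rewrite weight_occupied -partial_sum_nbrsE -partial_sum0 partial_sum_nbrs ?sub0set.
Qed.

End IndependentSets.

Lemma pow_inv_exp (q : R) (k : nat) : 0 < q -> pow (/ q) k = exp (- ln q * INR k).
Proof.
move=> q0; elim: k => [|k IH]; first by rewrite /= Rmult_0_r exp_0.
rewrite [LHS]/= IH S_INR Rmult_plus_distr_l Rmult_1_r exp_plus Rmult_comm.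
by rewrite exp_Ropp exp_ln.
Qed.

Lemma exp_tangent (L Y y : R) : exp (- L * y) * (1 - L * (Y - y)) <= exp (- L * Y).
Proof.
have -> : - L * Y = - L * y + - L * (Y - y) by ring.
rewrite exp_plus; apply: Rmult_le_compat_l; first exact: Rlt_le (exp_pos _).
by have := exp_ineq1_le (- L * (Y - y)); lra.
Qed.

Lemma indep_poly_gt0 (V : finType) (e : rel V) (lam : R) : 0 < lam -> 0 < indep_poly e lam.
Proof.
move=> lam0; have i0 : independent e set0 by apply/forall_inP => x; rewrite inE.
rewrite /indep_poly (bigD1 set0) //= cards0; apply: Rplus_lt_le_0_compat; first lra.
by apply: big_Rge0 => J _; apply: pow_le; lra.
Qed.

Section Occupancy.
Variables (V : finType) (e : rel V).
Hypothesis e_sym : forall x y, e x y = e y x.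
Hypothesis e_irr : forall x, e x x = false.
Hypothesis e_tf : triangle_free e.
Variable lam : R.
Hypothesis lam_pos : 0 < lam.
Variable d : nat.
Hypothesis deg_le : forall v, (deg e v <= d)%N.

Definition occupied_weight (x : V) :=
  \big[Rplus/R0]_(J | independent e J && (x \in J)) weight lam J.
Definition uncovered_weight (x : V) :=
  \big[Rplus/R0]_(J | independent e J && uncovered e J x) weight lam J.
Definition free_nbrs_sum := \big[Rplus/R0]_(v : V)
  \big[Rplus/R0]_(J | independent e J) (weight lam J * INR (free_nbrs e v J)).
Definition free_nbrs_exp_sum := \big[Rplus/R0]_(v : V)
  \big[Rplus/R0]_(J | independent e J) (weight lam J * pow (/ (1 + lam)) (free_nbrs e v J)).

Lemma weight_ge0 (J : {set V}) : 0 <= weight lam J.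
Proof. by apply: pow_le; lra. Qed.

Lemma lam_dindep_poly_occupied : lam_dindep_poly e lam = \big[Rplus/R0]_x occupied_weight x.
Proof.
rewrite /occupied_weight (exchange_big_dep (independent e)) => [|x J _ /andP[] //].
apply: eq_bigr => J iJ; rewrite (eq_bigl (mem J)) => [|x]; last by rewrite /= iJ.
rewrite big_Rconst; congr (INR _ * _).
by apply: eq_card => x; rewrite inE.
Qed.

Lemma free_nbrs_sumE :
  free_nbrs_sum = \big[Rplus/R0]_x (INR (deg e x) * uncovered_weight x).
Proof.
rewrite /free_nbrs_sum /uncovered_weight.
transitivity (\big[Rplus/R0]_v \big[Rplus/R0]_(x | e v x)
    \big[Rplus/R0]_(J | independent e J && uncovered e J x) weight lam J).
  apply: eq_bigr => v _; rewrite (exchange_big_dep (independent e)) => [|x J _ /andP[] //].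
  apply: eq_bigr => J iJ; rewrite big_Rconst Rmult_comm /free_nbrs; congr (INR _ * _).
  by apply: eq_card => x; rewrite !inE iJ.
rewrite (exchange_big_dep xpredT) //=; apply: eq_bigr => x _.
rewrite big_Rconst /deg; congr (INR _ * _); apply: eq_card => y.
by rewrite !inE e_sym.
Qed.

Lemma free_nbrs_sum_le :
  lam * free_nbrs_sum <= (1 + lam) * INR d * lam_dindep_poly e lam.
Proof.
rewrite free_nbrs_sumE lam_dindep_poly_occupied !big_distrr /=.
apply: big_Rle => x _; rewrite /uncovered_weight.
have -> : lam * (INR (deg e x) * \big[Rplus/R0]_(J | independent e J && uncovered e J x)
    weight lam J) = INR (deg e x) * ((1 + lam) * occupied_weight x).
  by rewrite /occupied_weight weight_occupied //; ring.
have occ0 : 0 <= (1 + lam) * occupied_weight x.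
  by apply: Rmult_le_pos; [lra | apply: big_Rge0 => J _; apply: weight_ge0].
have : INR (deg e x) <= INR d by apply/le_INR/leP.
by nra.
Qed.

Lemma free_nbrs_exp_sumE : (1 + lam) * lam_dindep_poly e lam = lam * free_nbrs_exp_sum.
Proof.
rewrite lam_dindep_poly_occupied /free_nbrs_exp_sum !big_distrr /=.
by apply: eq_bigr => v _; apply: weight_occupied_free_nbrs => //; lra.
Qed.

(* Jensen's inequality for the convex map Y |-> (1 + lam)^(-Y), via its tangent at y. *)
Lemma free_nbrs_exp_sum_ge (y : R) :
  let E := exp (- ln (1 + lam) * y) in
  E * (1 + ln (1 + lam) * y) * (INR #|V| * indep_poly e lam)
    - E * ln (1 + lam) * free_nbrs_sum <= free_nbrs_exp_sum.
Proof.
move=> E.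
have -> : INR #|V| * indep_poly e lam = \big[Rplus/R0]_(v : V) indep_poly e lam.
  by rewrite big_Rconst -cardsT.
rewrite /free_nbrs_exp_sum /free_nbrs_sum !big_distrr -big_Rminus /=.
apply: big_Rle => v _; rewrite /indep_poly.
rewrite !big_distrr -big_Rminus /=; apply: big_Rle => J _.
rewrite pow_inv_exp; last lra.
have := exp_tangent (ln (1 + lam)) (INR (free_nbrs e v J)) y.
move/(Rmult_le_compat_l _ _ _ (weight_ge0 J)); rewrite /weight /E; lra.
Qed.

Lemma avg_alpha_dichotomy (y : R) : 0 < INR #|V| ->
  lam * y <= (1 + lam) * INR d * (/ INR #|V| * avg_alpha e lam) \/
  lam * exp (- ln (1 + lam) * y) <= (1 + lam) * (/ INR #|V| * avg_alpha e lam).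
Proof.
move=> n0; have /= jensen := free_nbrs_exp_sum_ge y; have nbrs_le := free_nbrs_sum_le.
have exp_sumE := free_nbrs_exp_sumE; set n := INR #|V| in n0 jensen *.
set P := indep_poly e lam in jensen *; set S := lam_dindep_poly e lam in nbrs_le exp_sumE *.
have P0 : 0 < P by apply: indep_poly_gt0.
have nP0 : 0 < n * P by apply: Rmult_lt_0_compat.
have -> : / n * avg_alpha e lam = S / (n * P).
  by rewrite /avg_alpha -/S -/P /Rdiv Rinv_mult; ring.
suff [h|h] : lam * y * (n * P) <= (1 + lam) * INR d * S \/
  lam * exp (- ln (1 + lam) * y) * (n * P) <= (1 + lam) * S; [left|right|].
- apply: (Rmult_le_reg_r (n * P)) => //; rewrite !Rmult_assoc Rinv_l; lra.
- apply: (Rmult_le_reg_r (n * P)) => //; rewrite !Rmult_assoc Rinv_l; lra.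
have L0 : 0 < ln (1 + lam) by rewrite -ln_1; apply: ln_increasing; lra.
have E0 := exp_pos (- ln (1 + lam) * y).
case: (Rle_lt_dec (lam * y * (n * P)) ((1 + lam) * INR d * S)) => h; [by left | right].
have : exp (- ln (1 + lam) * y) * ln (1 + lam) * (lam * free_nbrs_sum)
  <= exp (- ln (1 + lam) * y) * ln (1 + lam) * (lam * y * (n * P)).
  by apply: Rmult_le_compat_l; [apply: Rmult_le_pos | ]; lra.
by nra.
Qed.

Lemma avg_alpha_ge_of_exp_bound (del a y : R) : 0 < INR #|V| -> 0 < INR d ->
  lam * y = (1 + lam) * INR d * ((1 - del) * a) ->
  (1 + lam) * ((1 - del) * a) <= lam * exp (- ln (1 + lam) * y) ->
  (1 - del) * a <= / INR #|V| * avg_alpha e lam.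
Proof.
move=> n0 d0 lam_y exp_bound; case: (avg_alpha_dichotomy y n0) => [|h].
  rewrite lam_y; apply: Rmult_le_reg_l; apply: Rmult_lt_0_compat; lra.
by apply: (Rmult_le_reg_l (1 + lam)); lra.
Qed.

End Occupancy.

Lemma pow_cross_diff_ge0 (l1 l2 : R) (j k : nat) : 0 < l1 -> l1 <= l2 ->
  0 <= (INR j - INR k) * (pow l2 j * pow l1 k - pow l1 j * pow l2 k).
Proof.
move=> l1_gt0 l12.
have key m i : 0 <= pow l2 (i + m) * pow l1 i - pow l1 (i + m) * pow l2 i.
  have : pow l1 m <= pow l2 m by apply: pow_incr; lra.
  have : 0 <= pow l1 i * pow l2 i by apply: Rmult_le_pos; apply: pow_le; lra.
  by rewrite !pow_add; nra.
have [kj | jk] := leqP k j.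
  rewrite -(subnKC kj) plus_INR; apply: Rmult_le_pos; last exact: key.
  by have := pos_INR (j - k); lra.
rewrite -(subnKC (ltnW jk)) plus_INR.
by have := key (k - j)%N j; have := pos_INR (k - j); nra.
Qed.

Lemma avg_alpha_le (V : finType) (e : rel V) (l1 l2 : R) : 0 < l1 -> l1 <= l2 ->
  avg_alpha e l1 <= avg_alpha e l2.
Proof.
move=> l1_gt0 l12; rewrite /avg_alpha /lam_dindep_poly.
have P1 := indep_poly_gt0 e l1_gt0.
have P2 : 0 < indep_poly e l2 by apply: indep_poly_gt0; lra.
rewrite /indep_poly in P1 P2 *.
set S1 := \big[Rplus/R0]_(J : {set V} | independent e J) (INR #|J| * pow l1 #|J|).
set S2 := \big[Rplus/R0]_(J : {set V} | independent e J) (INR #|J| * pow l2 #|J|).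
set W1 := \big[Rplus/R0]_(J : {set V} | independent e J) pow l1 #|J| in P1 *.
set W2 := \big[Rplus/R0]_(J : {set V} | independent e J) pow l2 #|J| in P2 *.
have cross : S2 * W1 - S1 * W2 = \big[Rplus/R0]_(J | independent e J)
   \big[Rplus/R0]_(K | independent e K)
   (INR #|J| * pow l2 #|J| * pow l1 #|K| - INR #|J| * pow l1 #|J| * pow l2 #|K|).
  rewrite /S1 /S2 /W1 /W2 !big_distrlr /= -big_Rminus; apply: eq_bigr => J _.
  by rewrite -big_Rminus; apply: eq_bigr => K _; ring.
(* Symmetrising the double sum gives a sum of the nonnegative cross differences. *)
have : 0 <= (S2 * W1 - S1 * W2) + (S2 * W1 - S1 * W2).
  rewrite {1}cross cross [in X in _ + X]exchange_big -big_split /=.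
  apply: big_Rge0 => J _; rewrite -big_split /=; apply: big_Rge0 => K _.
  have := pow_cross_diff_ge0 #|J| #|K| l1_gt0 l12; lra.
move=> cross_ge0; apply: (Rmult_le_reg_r (W1 * W2)); first exact: Rmult_lt_0_compat.
have -> : S1 / W1 * (W1 * W2) = S1 * W2 by field; lra.
have -> : S2 / W2 * (W1 * W2) = S2 * W1 by field; lra.
lra.
Qed.

Lemma avg_alpha_ge0 (V : finType) (e : rel V) (l : R) : 0 < l -> 0 <= avg_alpha e l.
Proof.
move=> l0; apply: Rmult_le_pos; last exact/Rlt_le/Rinv_0_lt_compat/indep_poly_gt0.
by apply: big_Rge0 => J _; apply: Rmult_le_pos; [exact: pos_INR | apply: pow_le; lra].
Qed.

Lemma exp_le_compat (x y : R) : x <= y -> exp x <= exp y.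
Proof. by case/Rle_lt_or_eq_dec => [/exp_increasing/Rlt_le | ->] //; apply: Rle_refl. Qed.

Lemma pow_exp (x : R) (n : nat) : pow (exp x) n = exp (INR n * x).
Proof.
elim: n => [|n IH]; first by rewrite /= Rmult_0_l exp_0.
by rewrite [LHS]/= IH S_INR Rmult_plus_distr_r Rmult_1_l exp_plus Rmult_comm.
Qed.

Lemma ln1p_le (x : R) : 0 < x -> ln (1 + x) <= x.
Proof.
move=> x0; have [//|lt_x_ln] := Rle_or_lt (ln (1 + x)) x.
by have := exp_increasing _ _ lt_x_ln; rewrite exp_ln; have := exp_ineq1_le x; lra.
Qed.

Lemma le_mul_exp_neg (a X l : R) : a * exp X <= l -> a <= l * exp (- X).
Proof.
move=> aXl; have eXX : exp X * exp (- X) = 1 by rewrite -exp_plus Rplus_opp_r exp_0.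
have := Rmult_le_compat_r _ _ _ (Rlt_le _ _ (exp_pos (- X))) aXl.
by rewrite Rmult_assoc eXX Rmult_1_r.
Qed.

Lemma exp_mul_one_sub_le (a : R) : 0 <= a < 1 -> exp (a * (1 - a)) <= 1 + a.
Proof.
move=> a01; have := exp_ineq1_le (- (a * (1 - a))).
have : exp (a * (1 - a)) * exp (- (a * (1 - a))) = 1 by rewrite -exp_plus Rplus_opp_r exp_0.
have := exp_pos (a * (1 - a)); have := exp_pos (- (a * (1 - a))); nra.
Qed.

Lemma le_div_of_mul_le (x y z : R) : 0 < z -> x * z <= y -> x <= y / z.
Proof.
by move=> z0 xzy; apply: (Rmult_le_reg_r z) => //; rewrite /Rdiv Rmult_assoc Rinv_l; lra.
Qed.

Lemma div_le_of_le_mul (x y z : R) : 0 < z -> y <= x * z -> y / z <= x.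
Proof.
by move=> z0 yxz; apply: (Rmult_le_reg_r z) => //; rewrite /Rdiv Rmult_assoc Rinv_l; lra.
Qed.

Lemma alpha_T_exp_le (d : nat) (lam a : R) : is_alpha_T d lam a ->
  a * exp (INR d * (a * (1 - a))) <= lam.
Proof.
case=> [[a0 a_lt] ->]; set r := (1 - a) / (1 - 2 * a).
have ar : 1 + a <= r by rewrite /r; apply: le_div_of_mul_le; [lra | nra].
have : exp (INR d * (a * (1 - a))) <= pow r d.
  rewrite -pow_exp; apply: pow_incr; split; first exact: Rlt_le (exp_pos _).
  by have := exp_mul_one_sub_le (conj (Rlt_le _ _ a0) (ltac:(lra) : a < 1)); lra.
have : a <= a / (1 - a) by apply: le_div_of_mul_le; [lra | nra].
have := exp_pos (INR d * (a * (1 - a))); nra.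
Qed.

Lemma alpha_T_le_exp (d : nat) (lam a : R) : is_alpha_T d lam a -> a <= / 4 ->
  lam <= 2 * a * exp (2 * INR d * a).
Proof.
case=> [[a0 a_lt] ->] a_le; set r := (1 - a) / (1 - 2 * a).
have r0 : 0 <= r by apply/Rlt_le/Rdiv_lt_0_compat; lra.
have : pow r d <= exp (2 * INR d * a).
  rewrite (_ : 2 * INR d * a = INR d * (2 * a)); last ring.
  rewrite -pow_exp; apply: pow_incr; split=> //.
  have : r <= 1 + 2 * a by rewrite /r; apply: div_le_of_le_mul; [lra | nra].
  by have := exp_ineq1_le (2 * a); lra.
have : a / (1 - a) <= 2 * a by apply: div_le_of_le_mul; [lra | nra].
have : 0 <= a / (1 - a) by apply/Rlt_le/Rdiv_lt_0_compat; lra.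
have := pow_le _ d r0; nra.
Qed.

Lemma exp_bound_small_activity (l del a dd y : R) :
  0 < l <= del / 4 -> del <= 1 -> 0 < a < / 2 -> 0 <= dd -> 0 <= y ->
  l * y = (1 + l) * dd * ((1 - del) * a) -> a * exp (dd * (a * (1 - a))) <= l ->
  (1 + l) * ((1 - del) * a) <= l * exp (- ln (1 + l) * y).
Proof.
move=> l_bd del1 a_bd dd0 y0 l_y a_exp; set X := dd * (a * (1 - a)) in a_exp.
have X0 : 0 <= X by apply: Rmult_le_pos; nra.
have a_l : a <= l by have := exp_ineq1_le X; have := exp_pos X; nra.
have Ly_X : ln (1 + l) * y <= X.
  have : ln (1 + l) * y <= l * y by apply: Rmult_le_compat_r => //; apply: ln1p_le; lra.
  have : dd * a * ((1 + l) * (1 - del)) <= dd * a * (1 - a).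
    by apply: Rmult_le_compat_l; nra.
  rewrite /X; nra.
have := exp_le_compat (Ropp_le_contravar _ _ Ly_X); rewrite Ropp_mult_distr_l => e_le.
have : l * exp (- X) <= l * exp (- ln (1 + l) * y) by apply: Rmult_le_compat_l; lra.
have := le_mul_exp_neg a_exp; have : (1 + l) * (1 - del) <= 1 by nra.
nra.
Qed.

Lemma exp_bound_large_activity (C del a dd y : R) :
  0 < del <= 1 -> 0 < a <= del / 4 -> 0 < C -> 16 * C / (del * del) <= dd * a -> 0 <= y ->
  del / 4 * y = (1 + del / 4) * dd * ((1 - del) * a) -> a * exp (dd * (a * (1 - a))) <= C ->
  (1 + del / 4) * ((1 - del) * a) <= del / 4 * exp (- ln (1 + del / 4) * y).
Proof.
move=> del_bd a_bd C0 dda y0 l_y a_exp; set X := dd * (a * (1 - a)) in a_exp.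
set Z := dd * a * del / 2.
have Ly_XZ : ln (1 + del / 4) * y <= X - Z.
  have : ln (1 + del / 4) * y <= del / 4 * y.
    by apply: Rmult_le_compat_r => //; apply: ln1p_le; lra.
  have : (1 + del / 4) * (1 - del) <= 1 - a - del / 2 by nra.
  have : 0 <= 16 * C / (del * del) by apply/Rlt_le/Rdiv_lt_0_compat; nra.
  rewrite /X /Z; nra.
have Z_ge : 8 * C / del <= exp Z.
  have : 16 * C / (del * del) * del = 2 * (8 * C / del) by field; lra.
  have := exp_ineq1_le Z; rewrite /Z; nra.
have e_a : a <= C * exp (- X) by apply: le_mul_exp_neg.
have : a * (8 / del) <= exp (- X) * exp Z.
  apply: (Rmult_le_reg_l C) => //.
  have : a * (8 * C / del) <= C * exp (- X) * exp Z.
    apply: Rmult_le_compat => //; try lra.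
    by apply/Rlt_le/Rdiv_lt_0_compat; lra.
  have -> : a * (8 * C / del) = C * (a * (8 / del)) by field; lra.
  lra.
rewrite -exp_plus => eZX; have := exp_le_compat (Ropp_le_contravar _ _ Ly_XZ).
rewrite Ropp_mult_distr_l (_ : - (X - Z) = - X + Z); last ring.
have : del / 4 * (a * (8 / del)) = 2 * a by field; lra.
nra.
Qed.

Lemma alpha_T_le_of_large_degree (C del lam a : R) (d : nat) : 0 < del -> lam <= C ->
  32 * C / (del * del) < INR d -> is_alpha_T d lam a -> a <= del / 4.
Proof.
move=> del0 lamC d_large alpha; have [[a0 a_lt] _] := alpha.
have [//|a_gt] := Rle_or_lt a (del / 4); exfalso.
have a_exp := alpha_T_exp_le alpha; have eX := exp_ineq1_le (INR d * (a * (1 - a))).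
have d0 := pos_INR d.
have da2 : 0 <= INR d * (a * a) * (/ 2 - a).
  by apply: Rmult_le_pos; [apply: Rmult_le_pos; nra | lra].
have da2C : INR d * (a * a) / 2 <= C by nra.
have : 32 * C / (del * del) * (del * del) = 32 * C by field; lra.
have : 32 * C / (del * del) * (del * del) < INR d * (del * del).
  by apply: Rmult_lt_compat_r; nra.
have : INR d * (del * del) <= INR d * (16 * (a * a)) by apply: Rmult_le_compat_l; nra.
lra.
Qed.

Lemma alpha_T_mul_ge_of_large_degree (T del lam a : R) (d : nat) : 0 < del -> 0 <= T ->
  del / 4 < lam -> a <= / 4 -> 8 * T * exp (2 * T) / del < INR d ->
  is_alpha_T d lam a -> T <= INR d * a.
Proof.
move=> del0 T0 lam_gt a_le d_large alpha; have [[a0 _] _] := alpha.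
have [//|da_lt] := Rle_or_lt T (INR d * a); exfalso.
have d0 := pos_INR d; have E0 := exp_pos (2 * T).
have lam_le : lam <= 2 * a * exp (2 * T).
  apply: Rle_trans (alpha_T_le_exp alpha a_le) _; apply: Rmult_le_compat_l; first lra.
  by apply: exp_le_compat; lra.
have := Rmult_le_compat_l _ _ _ d0 lam_le.
have : 2 * (INR d * a) * exp (2 * T) <= 2 * T * exp (2 * T).
  by apply: Rmult_le_compat_r; lra.
have : 8 * T * exp (2 * T) / del * del = 8 * T * exp (2 * T) by field; lra.
have : 8 * T * exp (2 * T) / del * del < INR d * del by apply: Rmult_lt_compat_r.
have : INR d * (del / 4) <= INR d * lam by apply: Rmult_le_compat_l; lra.
lra.
Qed.

Lemma avg_alpha_ge_eventually (C del : R) : 0 < C -> 0 < del <= 1 ->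
  exists D : nat, forall d : nat, (D <= d)%N -> forall lam, 0 < lam -> lam <= C ->
  forall (V : finType) (e : rel V),
    simple_graph e -> triangle_free e -> max_degree_eq e d ->
    forall a : R, is_alpha_T d lam a -> (1 - del) * a <= / INR #|V| * avg_alpha e lam.
Proof.
move=> C0 del_bd; set T := 16 * C / (del * del).
have T0 : 0 <= T by apply/Rlt_le/Rdiv_lt_0_compat; nra.
have b1 : 0 < 32 * C / (del * del) by apply: Rdiv_lt_0_compat; nra.
have b2 : 0 <= 8 * T * exp (2 * T) / del.
  by apply: Rle_mult_inv_pos; [have := exp_pos (2 * T); nra | lra].
have [D D_large] := INR_unbounded (32 * C / (del * del) + 8 * T * exp (2 * T) / del).
exists D => d Dd lam lam0 lamC V e [e_sym e_irr] e_tf [deg_le [v _]] a alpha.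
have d_large := Rlt_le_trans _ _ _ D_large (le_INR _ _ (elimT leP Dd)).
have n0 : 0 < INR #|V| by apply/lt_0_INR/ltP/card_gt0P; exists v.
have [[a0 a_lt] _] := alpha; have a_exp := alpha_T_exp_le alpha.
have a_le : a <= del / 4 by apply: (alpha_T_le_of_large_degree (C := C)) alpha => //; lra.
have y_ge0 l : 0 < l -> 0 <= (1 + l) * INR d * ((1 - del) * a) / l.
  move=> l0; apply: Rle_mult_inv_pos => //.
  by apply: Rmult_le_pos; [apply: Rmult_le_pos; [lra | exact: pos_INR] | nra].
have d0 : 0 < INR d by lra.
have [lam_le | lam_gt] := Rle_or_lt lam (del / 4).
  apply: (avg_alpha_ge_of_exp_bound e_sym e_irr e_tf lam0 deg_le
    (y := (1 + lam) * INR d * ((1 - del) * a) / lam)) => //; first by field; lra.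
  apply: (exp_bound_small_activity (dd := INR d)) => //;
    [lra | exact: pos_INR | exact: y_ge0 | by field; lra].
have l0 : 0 < del / 4 by lra.
have n_inv : 0 <= / INR #|V| by apply/Rlt_le/Rinv_0_lt_compat.
apply: Rle_trans (Rmult_le_compat_l _ _ _ n_inv (avg_alpha_le e l0 (Rlt_le _ _ lam_gt))).
apply: (avg_alpha_ge_of_exp_bound e_sym e_irr e_tf l0 deg_le
  (y := (1 + del / 4) * INR d * ((1 - del) * a) / (del / 4))) => //; first by field; lra.
apply: (exp_bound_large_activity (C := C) (dd := INR d)) => //;
  [|exact: y_ge0 | by field; lra | lra].
by apply: (alpha_T_mul_ge_of_large_degree (T := T) (del := del)) alpha => //; lra.
Qed.

(* Diagonalisation: [eps d] is [/ (k + 1)] for the largest [k <= d] whose threshold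
   [Df k] has been passed by [d] (and [1] if there is none). *)
Lemma Un_cv_diagonal (Q : R -> nat -> Prop) :
  (forall d, Q 1 d) ->
  (forall k : nat, exists D : nat, forall d, (D <= d)%N -> Q (/ (INR k + 1)) d) ->
  exists eps : nat -> R, Un_cv eps 0 /\ forall d, Q (eps d) d.
Proof.
move=> Q1 QD.
have [Df DfP] : exists Df : nat -> nat, forall k d, (Df k <= d)%N -> Q (/ (INR k + 1)) d.
  by exists (fun k => proj1_sig (constructive_indefinite_description _ (QD k))) => k;
    exact: proj2_sig (constructive_indefinite_description _ (QD k)).
pose P d := [pred k : 'I_d.+1 | (val k == 0%N) || (Df k <= d)%N].
pose K d := (\max_(k in P d) val k)%N.
have KP d : (K d == 0%N) || (Df (K d) <= d)%N.
  have P0 : (0 < #|P d|)%N by apply/card_gt0P; exists ord0; rewrite inE.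
  by rewrite /K; have [k kP ->] := eq_bigmax_cond val P0; move: kP; rewrite inE.
have K_ge k d : (maxn k (Df k) <= d)%N -> (k <= K d)%N.
  move=> kd; have kd1 : (k < d.+1)%N by rewrite ltnS (leq_trans (leq_maxl _ _) kd).
  apply: (@leq_bigmax_cond _ (P d) val (Ordinal kd1)).
  by rewrite inE (leq_trans (leq_maxr _ _) kd) orbT.
exists (fun d => / (INR (K d) + 1)); split => [eps eps0 | d].
  have [m m_large] := INR_unbounded (/ eps).
  exists (maxn m (Df m)) => d /leP /K_ge /leP /le_INR Km.
  have m1 : 0 < INR m + 1 by have := pos_INR m; lra.
  rewrite /R_dist Rminus_0_r Rabs_pos_eq; last by apply/Rlt_le/Rinv_0_lt_compat; lra.
  apply: Rle_lt_trans (_ : / (INR m + 1) < eps); first by apply: Rinv_le_contravar; lra.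
  rewrite -(Rinv_inv eps); apply: Rinv_lt_contravar; last lra.
  by apply: Rmult_lt_0_compat => //; apply: Rinv_0_lt_compat.
by case/orP: (KP d) => [/eqP -> | /DfP //]; rewrite Rplus_0_l Rinv_1.
Qed.

Unset Implicit Arguments.

Theorem proposition4p1 (lam : nat -> R)
  (lam_pos : forall d : nat, (0 < lam d))
  (lam_bdd : exists C : R, forall d : nat, (lam d <= C)) :
  exists eps : nat -> R,
    Un_cv eps 0 /\
    forall (d : nat), (2 <= d)%N ->
    forall (V : finType) (e : rel V),
      simple_graph e -> triangle_free e -> max_degree_eq e d ->
      forall a : R, is_alpha_T d (lam d) a ->
        (/ INR #|V| * avg_alpha e (lam d) >= (1 - eps d) * a).
Proof.
have [C lamC] := lam_bdd.
pose Q del d := forall (V : finType) (e : rel V),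
  simple_graph e -> triangle_free e -> max_degree_eq e d ->
  forall a : R, is_alpha_T d (lam d) a -> (1 - del) * a <= / INR #|V| * avg_alpha e (lam d).
have [eps [eps0 epsQ]] : exists eps : nat -> R, Un_cv eps 0 /\ forall d, Q (eps d) d.
  apply: Un_cv_diagonal => [d V e _ _ [_ [v _]] a _ | k].
    rewrite Rminus_diag Rmult_0_l; apply: Rmult_le_pos; last exact: avg_alpha_ge0.
    by apply/Rlt_le/Rinv_0_lt_compat/lt_0_INR/ltP/card_gt0P; exists v.
  have k1 : 0 < INR k + 1 by have := pos_INR k; lra.
  have C0 : 0 < Rmax C 1 by have := Rmax_r C 1; lra.
  have del_bd : 0 < / (INR k + 1) <= 1.
    split; first exact: Rinv_0_lt_compat.
    by rewrite -[X in _ <= X]Rinv_1; apply: Rinv_le_contravar; have := pos_INR k; lra.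
  have [D DQ] := avg_alpha_ge_eventually C0 del_bd.
  exists D => d Dd; apply: DQ => //; exact: Rle_trans (lamC d) (Rmax_l C 1).
by exists eps; split=> // d _ V e Ge tfe dege a alpha; apply/Rle_ge/epsQ.
Qed.
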